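(* Let $G=(V,E,L)$ be a graph with loops and let $V^+:=\{i\in V:\{i,i\}\in L^+\}$. If $V^+$ is a stable set of the graph $(V,E)$, then $\mathrm{QP}(G)$ is second-order cone (SOC) representable.
   Context: A graph with loops is a triple $G=(V,E,L)$ where $V$ is a finite node set, $E$ is a set of unordered pairs $\{i,j\}$ of distinct nodes, and $L$ is a set of loops, each written $\{i,i\}$ for some $i\in V$ (at most one per node), partitioned as $L=L^-\cup L^+$ into minus loops and plus loops. Define $$\mathrm{QP}(G):=\mathrm{conv}\Big\{z\in\mathbb{R}^{V\cup E\cup L}: z_{ii}\ge z_i^2\ \forall\{i,i\}\in L^+,\ z_{ii}\le z_i^2\ \forall \{i,i\}\in L^-,\ z_{ij}=z_iz_j\ \forall \{i,j\}\in E,\ z_i\in[0,1]\ \forall i\in V\Big\}.$$ A convex set is SOC-representable if it is the projection of a set (in a possibly higher-dimensional space) described by finitely many linear equalities/inequalities and (rotated) second-order cone constraints composed with affine maps. *)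

From HB Require Import structures.
From mathcomp Require Import all_boot all_order all_algebra.
From mathcomp Require Import reals.
Set Implicit Arguments. Unset Strict Implicit. Unset Printing Implicit Defensive.
Import Order.TTheory GRing.Theory Num.Theory.
Local Open Scope ring_scope.

(* Nodes: a finite type T.  Edges: a set of 2-element subsets of T.
   Loops: a loop {i,i} is identified with its node i; L^+ and L^- are
   disjoint node sets (at most one loop per node). *)
Record graph_with_loops (T : finType) := GraphWithLoops {
  gE  : {set {set T}};
  gLp : {set T};
  gLm : {set T};
  gE_pairs : forall e, e \in gE -> #|e| = 2;
  gL_disj : [disjoint gLp & gLm]
}.

Definition gL (T : finType) (G : graph_with_loops T) : {set T} := gLp G :|: gLm G.

Definition edge_t (T : finType) (G : graph_with_loops T) := {e : {set T} | e \in gE G}.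
Definition loop_t (T : finType) (G : graph_with_loops T) := {i : T | i \in gL G}.

Definition coord (T : finType) (G : graph_with_loops T) : finType :=
  (T + edge_t G + loop_t G)%type.

Definition zV (T : finType) (G : graph_with_loops T) (i : T) : coord G := inl (inl i).
Definition zE (T : finType) (G : graph_with_loops T) (e : edge_t G) : coord G := inl (inr e).
Definition zL (T : finType) (G : graph_with_loops T) (l : loop_t G) : coord G := inr l.

Definition QPpoints (R : realType) (T : finType) (G : graph_with_loops T)
    (z : coord G -> R) : Prop :=
  [/\ (forall l : loop_t G, val l \in gLp G -> z (zL l) >= (z (zV G (val l))) ^+ 2),
      (forall l : loop_t G, val l \in gLm G -> z (zL l) <= (z (zV G (val l))) ^+ 2),
      (forall (e : edge_t G) (i j : T), val e = [set i; j] ->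
          z (zE e) = z (zV G i) * z (zV G j)) &
      (forall i : T, 0 <= z (zV G i) <= 1)].

Definition conv_hull (R : realType) (I : finType) (A : (I -> R) -> Prop)
    (z : I -> R) : Prop :=
  exists (n : nat) (lam : 'I_n -> R) (p : 'I_n -> I -> R),
    [/\ forall k, 0 <= lam k,
        \sum_(k < n) lam k = 1,
        forall k, A (p k) &
        forall i, z i = \sum_(k < n) lam k * p k i].

Definition QP (R : realType) (T : finType) (G : graph_with_loops T) :
  (coord G -> R) -> Prop := conv_hull (@QPpoints R T G).

Definition plus_stable (T : finType) (G : graph_with_loops T) : Prop :=
  forall i j : T, [set i; j] \in gE G -> ~ (i \in gLp G /\ j \in gLp G).

Record affine (R : realType) (K : finType) := Affine { aff_coef : K -> R; aff_cst : R }.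
Definition aff_eval (R : realType) (K : finType) (f : affine R K) (x : K -> R) : R :=
  \sum_(k : K) aff_coef f k * x k + aff_cst f.

Inductive constr (R : realType) (K : finType) :=
  | CEq  of affine R K
  | CLe  of affine R K
  | CSOC of seq (affine R K) & affine R K
  | CRSOC of seq (affine R K) & affine R K & affine R K.

Definition constr_sat (R : realType) (K : finType) (c : constr R K) (x : K -> R) : Prop :=
  match c with
  | CEq f => aff_eval f x = 0
  | CLe f => aff_eval f x <= 0
  | CSOC fs g => 0 <= aff_eval g x /\
       \sum_(f <- fs) (aff_eval f x) ^+ 2 <= (aff_eval g x) ^+ 2
  | CRSOC fs g h => [/\ 0 <= aff_eval g x, 0 <= aff_eval h x &
       \sum_(f <- fs) (aff_eval f x) ^+ 2 <= aff_eval g x * aff_eval h x]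
  end.

Definition join_vec (R : realType) (I J : finType) (x : I -> R) (y : J -> R)
  : (I + J)%type -> R := fun k => match k with inl i => x i | inr j => y j end.

Definition SOC_representable (R : realType) (I : finType) (S : (I -> R) -> Prop) : Prop :=
  exists (J : finType) (m : nat) (cs : 'I_m -> constr R (I + J)%type),
    forall x : I -> R,
      S x <-> exists y : J -> R, forall c : 'I_m, constr_sat (cs c) (join_vec x y).

From Pilot Require Import Defs.
From HB Require Import structures.
From mathcomp Require Import all_boot all_order all_algebra.
From mathcomp Require Import reals.
From mathcomp Require Import ring lra.
Set Implicit Arguments. Unset Strict Implicit. Unset Printing Implicit Defensive.
Import Order.TTheory GRing.Theory Num.Theory.
Local Open Scope ring_scope.

(* For a 0/1 labeling v of the nodes, the generating points of QP(G) whose nodes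
   outside V^+ take the values v form a convex piece: as V^+ is stable, every edge
   has an endpoint of fixed value, so its product constraint becomes linear, and
   what remains is z_ii >= z_i^2 on plus loops and z_ii <= v_i on minus loops.
   Every generating point p is a mixture of points of the pieces: draw the nodes
   outside V^+ as independent Bernoulli(p_i) bits, keep p_i on V^+, multiply
   along edges and shift minus loops by v_i - p_i.  So QP(G) is the convex hull
   of finitely many pieces, and the disjunctive lift (one homogenized copy per
   piece, where z_i^2 <= z_ii t_v is a rotated cone) represents it; copies of
   weight t_v = 0 are recession directions, which only raise plus loops and lower
   minus loops, so the projection stays inside QP(G). *)

Lemma rsoc_add (R : realFieldType) (x x' l l' t t' : R) :
  0 <= l -> 0 <= l' -> 0 <= t -> 0 <= t' ->
  x ^+ 2 <= l * t -> x' ^+ 2 <= l' * t' ->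
  (x + x') ^+ 2 <= (l + l') * (t + t').
Proof.
move=> l0 l'0 t0 t'0 hx hx'.
have hprod := ler_pM (sqr_ge0 x) (sqr_ge0 x') hx hx'.
(* AM-GM: (2 x x')^2 <= 4 (l t) (l' t') <= (l t' + l' t)^2 *)
have hsq : (2 * x * x') ^+ 2 <= (l * t' + l' * t) ^+ 2.
  by have := sqr_ge0 (l * t' - l' * t); nra.
have hpos : 0 <= l * t' + l' * t by rewrite addr_ge0 ?mulr_ge0.
have cross : 2 * x * x' <= l * t' + l' * t by nra.
nra.
Qed.

Lemma rsoc_sum (R : realFieldType) (I : finType) (x l t : I -> R) :
  (forall i, 0 <= l i) -> (forall i, 0 <= t i) ->
  (forall i, x i ^+ 2 <= l i * t i) ->
  (\sum_i x i) ^+ 2 <= (\sum_i l i) * \sum_i t i.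
Proof.
move=> l0 t0 hx.
pose cone (a b c : R) := [/\ 0 <= b, 0 <= c & a ^+ 2 <= b * c].
suff : cone (\sum_i x i) (\sum_i l i) (\sum_i t i) by case.
apply: (big_rec3 cone) => [|i a b c _ [b0 c0 habc]].
  by split; rewrite // expr0n mul0r.
by split; [rewrite addr_ge0|rewrite addr_ge0|apply: rsoc_add].
Qed.

Lemma sum_ffun_prod_moment (R : comNzRingType) (I B : finType) (w y : I -> B -> R)
    (S : {set I}) :
  (forall i, \sum_b w i b = 1) ->
  \sum_(f : {ffun I -> B}) (\prod_i w i (f i)) * \prod_(i in S) y i (f i) =
  \prod_(i in S) \sum_b w i b * y i b.
Proof.
move=> w1.
transitivity (\sum_(f : {ffun I -> B})
               \prod_i (w i (f i) * if i \in S then y i (f i) else 1)).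
  by apply: eq_bigr => f _; rewrite big_split /= -big_mkcond.
rewrite -(bigA_distr_bigA (fun i b => w i b * if i \in S then y i b else 1)).
rewrite [RHS]big_mkcond; apply: eq_bigr => i _.
case: ifP => _ //; under eq_bigr do rewrite mulr1; exact: w1.
Qed.

Lemma conv_hull_fin (R : realType) (K I : finType) (A : (K -> R) -> Prop)
    (lam : I -> R) (p : I -> K -> R) (z : K -> R) :
  (forall i, 0 <= lam i) -> \sum_i lam i = 1 -> (forall i, A (p i)) ->
  (forall c, z c = \sum_i lam i * p i c) -> conv_hull A z.
Proof.
move=> lam0 lam1 Ap zE.
exists #|{: I}|, (lam \o enum_val), (p \o enum_val).
have enumE (F : I -> R) : \sum_(k < #|{: I}|) F (enum_val k) = \sum_i F i.
  by rewrite -big_enum_val.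
split=> //= [|c]; first by rewrite -lam1 -enumE.
by rewrite zE -enumE.
Qed.

Section AffineConstraints.
Variables (R : realType) (K : finType).
Implicit Types (f g h : affine R K) (x : K -> R).

Definition avar (k : K) : affine R K := Affine (fun k' => (k' == k)%:R) 0.
Definition acst (a : R) : affine R K := Affine (fun=> 0) a.
Definition ascale (a : R) f : affine R K :=
  Affine (fun k => a * aff_coef f k) (a * aff_cst f).
Definition asub f g : affine R K :=
  Affine (fun k => aff_coef f k - aff_coef g k) (aff_cst f - aff_cst g).
Definition asum (I : finType) (F : I -> affine R K) : affine R K :=
  Affine (fun k => \sum_i aff_coef (F i) k) (\sum_i aff_cst (F i)).

Lemma avarE k x : aff_eval (avar k) x = x k.
Proof.
rewrite /aff_eval /= addr0 (bigD1 k) //= eqxx mul1r big1 ?addr0 // => k' /negbTE.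
by rewrite eq_sym => ->; rewrite mul0r.
Qed.

Lemma acstE a x : aff_eval (acst a) x = a.
Proof. by rewrite /aff_eval big1 ?add0r // => k _; rewrite mul0r. Qed.

Lemma ascaleE a f x : aff_eval (ascale a f) x = a * aff_eval f x.
Proof.
rewrite /aff_eval mulrDr mulr_sumr; congr (_ + _).
by apply: eq_bigr => k _; rewrite mulrA.
Qed.

Lemma asubE f g x : aff_eval (asub f g) x = aff_eval f x - aff_eval g x.
Proof.
rewrite /aff_eval /=; under eq_bigr do rewrite mulrBl.
rewrite sumrB; ring.
Qed.

Lemma asumE (I : finType) (F : I -> affine R K) x :
  aff_eval (asum F) x = \sum_i aff_eval (F i) x.
Proof.
rewrite /aff_eval /=; under eq_bigr do rewrite mulr_suml.
by rewrite exchange_big -big_split.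
Qed.

Definition cle f g := CLe (asub f g).
Definition ceq f g := CEq (asub f g).

Lemma cleP f g x : constr_sat (cle f g) x <-> aff_eval f x <= aff_eval g x.
Proof. by rewrite /= asubE subr_le0. Qed.

Lemma ceqP f g x : constr_sat (ceq f g) x <-> aff_eval f x = aff_eval g x.
Proof.
by rewrite /= asubE; split=> [/eqP|->]; rewrite ?subrr // subr_eq0 => /eqP.
Qed.

Lemma rsoc1P f g h x :
  constr_sat (CRSOC [:: f] g h) x <->
  [/\ 0 <= aff_eval g x, 0 <= aff_eval h x &
      aff_eval f x ^+ 2 <= aff_eval g x * aff_eval h x].
Proof. by rewrite /= big_seq1. Qed.

Fixpoint sat_all (cs : seq (constr R K)) x : Prop :=
  if cs is c :: cs' then constr_sat c x /\ sat_all cs' x else True.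

Lemma sat_all_cat cs1 cs2 x :
  sat_all (cs1 ++ cs2) x <-> sat_all cs1 x /\ sat_all cs2 x.
Proof.
elim: cs1 => [|c cs1 IH] /=; first by split=> // -[].
by split=> [[hc /IH[h1 h2]]|[[hc h1] h2]]; do ?split=> //; apply/IH.
Qed.

Lemma sat_all_big (I : finType) (P : pred I) (F : I -> seq (constr R K)) x :
  sat_all (\big[cat/[::]]_(i | P i) F i) x <-> forall i, P i -> sat_all (F i) x.
Proof.
suff gen r : sat_all (\big[cat/[::]]_(i <- r | P i) F i) x <->
             forall i, i \in r -> P i -> sat_all (F i) x.
  split=> [/gen h i|h]; first exact/h/mem_index_enum.
  by apply/gen => i _; apply: h.
elim: r => [|a r IH]; first by rewrite big_nil.
rewrite big_cons; case: ifP => Pa.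
  rewrite sat_all_cat; split=> [[ha /IH hr] i|h].
    by rewrite inE => /predU1P[-> //|]; apply: hr.
  split; first exact: h (mem_head _ _) Pa.
  by apply/IH => i ir; apply: h; rewrite inE ir orbT.
split=> [/IH hr i|h].
  by rewrite inE => /predU1P[->|]; [rewrite Pa|apply: hr].
by apply/IH => i ir; apply: h; rewrite inE ir orbT.
Qed.

Lemma sat_all_nth c0 cs x :
  sat_all cs x <-> forall k : 'I_(size cs), constr_sat (nth c0 cs k) x.
Proof.
elim: cs => [|c cs IH] /=; first by split=> // _ [].
split=> [[hc /IH hcs] [[|k] hk] //|h].
  exact: hcs (Ordinal (hk : (k < size cs)%N)).
by split; [apply: (h ord0)|apply/IH => k; apply: (h (lift ord0 k))].
Qed.
End AffineConstraints.
Arguments avar {R K}.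
Arguments acst {R K}.

Lemma SOC_representable_system (R : realType) (I J : finType)
    (S : (I -> R) -> Prop) (cs : seq (constr R (I + J)%type)) :
  (forall x, S x <-> exists y, sat_all cs (join_vec x y)) -> SOC_representable S.
Proof.
move=> hS; exists J, (size cs), (fun k => nth (CEq (acst 0)) cs k) => x.
apply: iff_trans (hS x) _.
by split=> -[y hy]; exists y; apply/sat_all_nth.
Qed.

Section QPLift.
Variables (R : realType) (T : finType) (G : graph_with_loops T).
Local Notation P := (gLp G).
Local Notation labeling := {ffun T -> bool}.
Local Notation coords := (Defs.coord G).
Implicit Types (v : labeling) (p q D : coords -> R).

Lemma edge_neq (e : edge_t G) i j : val e = [set i; j] -> i != j.
Proof.
move=> ei; apply/negP => /eqP ij; have := gE_pairs (valP e).
by rewrite ei ij setUid cards1.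
Qed.

Lemma prod_edge (F : T -> R) (e : edge_t G) i j :
  val e = [set i; j] -> \prod_(k in val e) F k = F i * F j.
Proof.
by move=> ei; rewrite ei big_setU1 ?big_set1 // inE; apply: edge_neq ei.
Qed.

Lemma minus_loop_notin_plus i : i \in gLm G -> i \notin P.
Proof.
move=> im; apply/negP => ip; have := gL_disj G.
by rewrite disjoint_subset => /subsetP/(_ _ ip); rewrite inE im.
Qed.

Lemma loop_notin_plus_minus (l : loop_t G) : val l \notin P -> val l \in gLm G.
Proof. by have := valP l; rewrite /gL in_setU => /orP[->|]. Qed.

(* [piece_cone v 1] is the piece of the labeling [v] and [t] is the
   homogenizing variable. *)
Record piece_cone v (t : R) X : Prop := PieceCone {
  piece_cone_ge0 : 0 <= t;
  piece_cone_plus_node : forall i, i \in P -> 0 <= X (zV G i) <= t;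
  piece_cone_node : forall i, i \notin P -> X (zV G i) = (v i)%:R * t;
  piece_cone_edge : forall e i j, val e = [set i; j] -> i \notin P ->
    X (zE e) = (v i)%:R * X (zV G j);
  piece_cone_plus_loop : forall l, val l \in P ->
    0 <= X (zL l) /\ X (zV G (val l)) ^+ 2 <= X (zL l) * t;
  piece_cone_minus_loop : forall l, val l \notin P ->
    X (zL l) <= (v (val l))%:R * t }.

Lemma piece_cone_scale v a t X : 0 <= a -> piece_cone v t X ->
  piece_cone v (a * t) (fun c => a * X c).
Proof.
move=> a0 [t0 hpn hn he hpl hml]; split=> [|i ip|i ip|e i j ei ip|l lp|l lp].
- exact: mulr_ge0.
- have /andP[h0 h1] := hpn i ip.
  by rewrite mulr_ge0 ?(ler_wpM2l a0 h1).
- by rewrite hn // mulrCA.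
- by rewrite (he e i j) // mulrCA.
- have [h0 h1] := hpl l lp; split; first exact: mulr_ge0.
  by have := ler_wpM2l (sqr_ge0 a) h1; nra.
- by rewrite mulrCA (ler_wpM2l a0 (hml l lp)).
Qed.

Lemma piece_cone_sum v (I : finType) (t : I -> R) (X : I -> coords -> R) :
  (forall k, piece_cone v (t k) (X k)) ->
  piece_cone v (\sum_k t k) (fun c => \sum_k X k c).
Proof.
move=> hX; split=> [|i ip|i ip|e i j ei ip|l lp|l lp].
- by apply: sumr_ge0 => k _; case: (hX k).
- by rewrite sumr_ge0 ?ler_sum // => k _; case: (hX k) => _ /(_ i ip)/andP[].
- by rewrite mulr_sumr; apply: eq_bigr => k _; case: (hX k) => _ _ ->.
- rewrite mulr_sumr; apply: eq_bigr => k _.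
  by case: (hX k) => _ _ _ /(_ e i j ei ip).
- split; first by apply: sumr_ge0 => k _; case: (hX k) => _ _ _ _ /(_ l lp)[].
  by apply: rsoc_sum => k; case: (hX k) => // _ _ _ _ /(_ l lp)[].
- by rewrite mulr_sumr ler_sum // => k _; case: (hX k) => _ _ _ _ _ /(_ l lp).
Qed.

Definition recession_dir D : Prop :=
  [/\ forall i, D (zV G i) = 0, forall e, D (zE e) = 0,
      forall l, val l \in P -> 0 <= D (zL l) &
      forall l, val l \notin P -> D (zL l) <= 0].

Lemma recession_dir_sum (I : finType) (A : pred I) (D : I -> coords -> R) :
  (forall k, A k -> recession_dir (D k)) ->
  recession_dir (fun c => \sum_(k | A k) D k c).
Proof.
move=> hD; split=> [i|e|l lp|l lp].
- by apply: big1 => k /hD[].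
- by apply: big1 => k /hD[].
- by apply: sumr_ge0 => k /hD[_ _ /(_ l lp)].
- by apply: sumr_le0 => k /hD[_ _ _ /(_ l lp)].
Qed.

Lemma QPpoints_add_recession q D :
  QPpoints q -> recession_dir D -> QPpoints (fun c => q c + D c).
Proof.
case=> hp hm he hn [Dn De Dp Dm].
split=> [l lp|l lm|e i j ei|i] /=; rewrite ?Dn ?addr0.
- by rewrite ler_wpDr ?hp ?Dp.
- by rewrite ler_wnDr ?hm ?Dm ?minus_loop_notin_plus.
- by rewrite De addr0 (he e i j ei).
- exact: hn.
Qed.

Definition lifted z (t : labeling -> R) (X : labeling -> coords -> R) : Prop :=
  [/\ forall v, piece_cone v (t v) (X v), \sum_v t v = 1 &
      forall c, z c = \sum_v X v c].

Section PlusStable.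
Hypothesis stable : plus_stable G.

Lemma edge_plus_other (e : edge_t G) i j :
  val e = [set i; j] -> i \in P -> j \notin P.
Proof.
move=> ei ip; apply/negP => jp.
by apply: (stable (i := i) (j := j)); rewrite // -ei (valP e).
Qed.

Lemma piece_cone0_recession v X : piece_cone v 0 X -> recession_dir X.
Proof.
case=> _ hpn hn he hpl hml.
have node0 i : X (zV G i) = 0.
  case: (boolP (i \in P)) => ip; last by rewrite hn // mulr0.
  by apply/eqP; rewrite eq_le; case/andP: (hpn i ip) => -> ->.
split=> // [e|l lp|l lp].
- have /eqP/cards2P[i [j [_ ei]]] := gE_pairs (valP e).
  case: (boolP (i \in P)) => ip; last by rewrite (he e i j) // node0 mulr0.
  by rewrite (he e j i) ?node0 ?mulr0 ?(edge_plus_other ei) // ei setUC.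
- by case: (hpl l lp).
- by rewrite -(mulr0 (v (val l))%:R) hml.
Qed.

Lemma piece_QPpoints v q : piece_cone v 1 q -> QPpoints q.
Proof.
case=> _ hpn hn he hpl hml; split=> [l lp|l lm|e i j ei|i].
- by have [_] := hpl l lp; rewrite mulr1.
- have lp := minus_loop_notin_plus lm.
  by have := hml l lp; rewrite hn // !mulr1; case: (v _); rewrite ?expr1n ?expr0n.
- wlog ip : i j ei / i \notin P => [hwlog|].
    case: (boolP (i \in P)) => ip; last exact: hwlog.
    by rewrite mulrC; apply: hwlog; rewrite ?(edge_plus_other ei) // ei setUC.
  by rewrite (he e i j) // (hn i ip) mulr1.
- case: (boolP (i \in P)) => [/hpn //|ip].
  by rewrite hn // mulr1; case: (v i); rewrite ?lexx ?ler01.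
Qed.

Lemma piece_cone_QPpoints v t X :
  piece_cone v t X -> QPpoints (fun c => t^-1 * X c).
Proof.
move=> hX; have [t0 _ _ _ _ _] := hX.
have [->|tn0] := eqVneq t 0.
  by split=> *; rewrite invr0 !mul0r ?expr0n ?mulr0 ?lexx ?ler01.
apply: (piece_QPpoints (v := v)).
by rewrite -(mulVf tn0); apply: piece_cone_scale; rewrite ?invr_ge0.
Qed.

Lemma QP_of_lifted z t X : lifted z t X -> QP z.
Proof.
case=> hX t1 zX.
pose D c := \sum_(v | t v == 0) X v c.
have hD : recession_dir D.
  apply: recession_dir_sum => v /eqP t0.
  by apply: (piece_cone0_recession (v := v)); rewrite -t0.
(* Pieces of weight zero only contribute the recession direction [D]; as
   [0^-1 = 0], they are themselves represented by the point [D]. *)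
pose p v c := (t v)^-1 * X v c + D c.
apply: (conv_hull_fin (lam := t) (p := p)) => [v|//|v|c].
- by case: (hX v).
- exact/QPpoints_add_recession/hD/piece_cone_QPpoints/hX.
have scaled v : t v * ((t v)^-1 * X v c) = if t v != 0 then X v c else 0.
  by case: eqP => [->|/eqP tv]; rewrite ?mul0r // mulrA mulfV ?mul1r.
under eq_bigr do rewrite mulrDr scaled.
rewrite big_split /= -mulr_suml t1 mul1r -big_mkcond zX.
by rewrite [LHS](bigID (fun v => t v == 0)) addrC.
Qed.

End PlusStable.

Definition node_weight p i (b : bool) : R :=
  if i \in P then (~~ b)%:R else if b then p (zV G i) else 1 - p (zV G i).
Definition node_value p i (b : bool) : R := if i \in P then p (zV G i) else b%:R.
Definition piece_weight p v : R := \prod_i node_weight p i (v i).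

Definition piece_point p v : coords -> R := fun c =>
  match c with
  | inl (inl i) => node_value p i (v i)
  | inl (inr e) => \prod_(i in val e) node_value p i (v i)
  | inr l => if val l \in P then p (zL l)
             else (v (val l))%:R - p (zV G (val l)) + p (zL l)
  end.

Lemma node_weight_sum p i : \sum_b node_weight p i b = 1.
Proof. by rewrite big_bool /node_weight; case: (i \in P) => /=; ring. Qed.

Lemma node_value_mean p i :
  \sum_b node_weight p i b * node_value p i b = p (zV G i).
Proof. by rewrite big_bool /node_weight /node_value; case: (i \in P) => /=; ring. Qed.

Lemma piece_weight_ge0 p v :
  (forall i, 0 <= p (zV G i) <= 1) -> 0 <= piece_weight p v.
Proof.
move=> p01; apply: prodr_ge0 => i _; rewrite /node_weight.
by have /andP[p0 p1] := p01 i; case: (i \in P); case: (v i); rewrite ?subr_ge0.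
Qed.

Lemma piece_moment p (S : {set T}) :
  \sum_v piece_weight p v * \prod_(i in S) node_value p i (v i) =
  \prod_(i in S) p (zV G i).
Proof.
rewrite (sum_ffun_prod_moment _ _ (node_weight_sum p)).
by apply: eq_bigr => i _; apply: node_value_mean.
Qed.

Lemma sum_piece_weight p : \sum_v piece_weight p v = 1.
Proof.
have := piece_moment p set0; rewrite big_set0.
by under eq_bigr do rewrite big_set0 mulr1.
Qed.

Lemma node_moment p i :
  \sum_v piece_weight p v * node_value p i (v i) = p (zV G i).
Proof.
have := piece_moment p [set i]; rewrite big_set1.
by under eq_bigr do rewrite big_set1.
Qed.

Lemma piece_point_mean p c : QPpoints p ->
  \sum_v piece_weight p v * piece_point p v c = p c.
Proof.
case=> _ _ hedge _; case: c => [[i|e]|l] /=.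
- exact: node_moment.
- rewrite piece_moment.
  have /eqP/cards2P[i [j [_ ei]]] := gE_pairs (valP e).
  by rewrite (prod_edge _ ei) (hedge e i j ei).
case: (boolP (val l \in P)) => lp /=.
  by rewrite -mulr_suml sum_piece_weight mul1r.
transitivity (\sum_v piece_weight p v * node_value p (val l) (v (val l))
              + (p (zL l) - p (zV G (val l))) * \sum_v piece_weight p v).
  rewrite mulr_sumr -big_split; apply: eq_bigr => v _.
  by rewrite /node_value (negbTE lp) /=; ring.
by rewrite node_moment sum_piece_weight; ring.
Qed.

Lemma piece_point_piece p v : QPpoints p -> piece_cone v 1 (piece_point p v).
Proof.
case=> hp hm _ hn; split=> [|i ip|i ip|e i j ei ip|l lp|l lp] /=.
- exact: ler01.
- by rewrite /node_value ip.
- by rewrite /node_value (negbTE ip) mulr1.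
- by rewrite (prod_edge _ ei) {1}/node_value (negbTE ip).
- rewrite lp /node_value lp mulr1; have h := hp l lp.
  by split=> //; apply: le_trans h; apply: sqr_ge0.
- rewrite (negbTE lp) mulr1.
  have := hm l (loop_notin_plus_minus lp); have /andP[h0 h1] := hn (val l).
  nra.
Qed.

Lemma lifted_of_QP z : QP z -> exists t X, lifted z t X.
Proof.
case=> n [lam [p [lam0 lam1 hp zE]]].
pose a k v := lam k * piece_weight (p k) v.
have a0 k v : 0 <= a k v.
  by rewrite mulr_ge0 // piece_weight_ge0 //; case: (hp k).
exists (fun v => \sum_k a k v), (fun v c => \sum_k a k v * piece_point (p k) v c).
split=> [v||c].
- apply: piece_cone_sum => k.
  by have := piece_cone_scale (a0 k v) (piece_point_piece v (hp k)); rewrite mulr1.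
- rewrite exchange_big /= -lam1; apply: eq_bigr => k _.
  by rewrite -mulr_sumr sum_piece_weight mulr1.
rewrite zE exchange_big /=; apply: eq_bigr => k _.
rewrite -(piece_point_mean c (hp k)) mulr_sumr; apply: eq_bigr => v _.
by rewrite mulrA.
Qed.

Definition piece_cone_system (K : finType) v (t : K) (X : coords -> K) :
    seq (constr R K) :=
  let x c := avar (X c) in
  cle (acst 0) (avar t) ::
  \big[cat/[::]]_i
     (if i \in P then [:: cle (acst 0) (x (zV G i)); cle (x (zV G i)) (avar t)]
      else [:: ceq (x (zV G i)) (ascale (v i)%:R (avar t))]) ++
  \big[cat/[::]]_e \big[cat/[::]]_i
     \big[cat/[::]]_(j | (val e == [set i; j]) && (i \notin P))
     [:: ceq (x (zE e)) (ascale (v i)%:R (x (zV G j)))] ++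
  \big[cat/[::]]_l
     (if val l \in P then [:: CRSOC [:: x (zV G (val l))] (x (zL l)) (avar t)]
      else [:: cle (x (zL l)) (ascale (v (val l))%:R (avar t))]).

Lemma piece_cone_systemP (K : finType) v (t : K) (X : coords -> K) (x : K -> R) :
  sat_all (piece_cone_system v t X) x <-> piece_cone v (x t) (fun c => x (X c)).
Proof.
rewrite /piece_cone_system /=; split.
  case=> /cleP; rewrite acstE avarE => t0.
  case/sat_all_cat=> /sat_all_big hn /sat_all_cat[/sat_all_big he /sat_all_big hl].
  split=> // [i ip|i ip|e i j ei ip|l lp|l lp].
  - have := hn i isT; rewrite ip /= => -[/cleP + [/cleP + _]].
    by rewrite acstE !avarE => -> ->.
  - by have := hn i isT; rewrite (negbTE ip) /= => -[/ceqP + _]; rewrite ascaleE !avarE.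
  - have := he e isT; move/sat_all_big/(_ i isT)/sat_all_big/(_ j).
    by rewrite ei eqxx ip => /(_ isT) [/ceqP]; rewrite ascaleE !avarE.
  - by have := hl l isT; rewrite lp /= => -[/rsoc1P]; rewrite !avarE => -[].
  - by have := hl l isT; rewrite (negbTE lp) /= => -[/cleP]; rewrite ascaleE !avarE.
case=> t0 hpn hn he hpl hml; split; first by apply/cleP; rewrite acstE avarE.
apply/sat_all_cat; split; [|apply/sat_all_cat; split]; apply/sat_all_big => a _.
- case: ifP => ap /=.
    have /andP[h0 h1] := hpn a ap.
    by split; [apply/cleP; rewrite acstE avarE|split=> //; apply/cleP; rewrite !avarE].
  by split=> //; apply/ceqP; rewrite ascaleE !avarE hn ?ap.
- apply/sat_all_big => i _; apply/sat_all_big => j /andP[/eqP ei ip] /=.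
  by split=> //; apply/ceqP; rewrite ascaleE !avarE (he a i j).
- case: ifP => ap /=.
    by split=> //; apply/rsoc1P; rewrite !avarE; have [] := hpl a ap.
  by split=> //; apply/cleP; rewrite ascaleE !avarE hml ?ap.
Qed.

Local Notation lift_coords := (coords + labeling * option coords)%type.

Definition lift_system : seq (constr R lift_coords) :=
  ceq (asum (fun v => avar (inr (v, None)))) (acst 1) ::
  \big[cat/[::]]_c [:: ceq (avar (inl c)) (asum (fun v => avar (inr (v, Some c))))] ++
  \big[cat/[::]]_v piece_cone_system v (inr (v, None)) (fun c => inr (v, Some c)).

Lemma lift_systemP z (y : labeling * option coords -> R) :
  sat_all lift_system (join_vec z y) <->
  lifted z (fun v => y (v, None)) (fun v c => y (v, Some c)).
Proof.
have sum_var (F : labeling -> lift_coords) :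
    aff_eval (asum (fun v => avar (F v))) (join_vec z y) = \sum_v join_vec z y (F v).
  by rewrite asumE; apply: eq_bigr => v _; rewrite avarE.
rewrite /lift_system /=; split.
  case=> /ceqP; rewrite sum_var acstE => hsum.
  case/sat_all_cat=> /sat_all_big hz /sat_all_big hX.
  split=> // [v|c]; first by have /piece_cone_systemP := hX v isT.
  by have [/ceqP] := hz c isT; rewrite sum_var avarE.
case=> hX hsum hz; split; first by apply/ceqP; rewrite sum_var acstE.
apply/sat_all_cat; split; apply/sat_all_big => a _; last exact/piece_cone_systemP/hX.
by split=> //; apply/ceqP; rewrite sum_var avarE /= hz.
Qed.

End QPLift.

Theorem theorem2 (R : realType) (T : finType) (G : graph_with_loops T) :
  plus_stable G -> SOC_representable (@QP R T G).
Proof.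
move=> stable; apply: (SOC_representable_system (cs := lift_system R G)) => z.
split=> [/lifted_of_QP[t [X hz]]|[y /lift_systemP /(QP_of_lifted stable)] //].
exists (fun '(v, o) => if o is Some c then X v c else t v).
exact/lift_systemP.
Qed.
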